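(* Let $X$ be a standard connected coarse space and $A\subseteq X$. The following are equivalent: (1) $A$ is thin; (2) for all $x,y\in{}^*A\cap\mathrm{INF}(X)$, $x\sim_Xy$ implies $x=y$; (3) $G^c_X(x)\cap G^c_X(y)=\varnothing$ for all distinct $x,y\in{}^*A\cap\mathrm{INF}(X)$.
   Context: Nonstandard framework with transfer and sufficient saturation. Coarse structure $\mathcal{C}_X$: family of subsets of $X\times X$ containing the diagonal, closed under subsets, finite unions, inverses, compositions; connected if every singleton $\{(x,y)\}$ is controlled. Bounded sets: $B$ with $B\times B\in\mathcal{C}_X$; $\mathrm{INF}(X)={}^*X\setminus\bigcup_{B\text{ bounded}}{}^*B$. $x\sim_Xy$ iff $(x,y)\in{}^*E$ for some $E\in\mathcal{C}_X$; $G^c_X(x)=\{y\in{}^*X:x\sim_Xy\}$. $A$ is thin if for every $E\in\mathcal{C}_X$ there is a bounded $B\subseteq X$ with $E[x]\cap E[y]=\varnothing$ for all distinct $x,y\in A\setminus B$. *)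

(* plain Prop-valued sets.
   Nonstandard framework modelled as an ultrapower: hyperreal-style points of
   *X are functions I -> X, compared modulo an ultrafilter U on I. *)
From Stdlib Require Import List.
Import ListNotations.

Record ultrafilter {I : Type} (U : (I -> Prop) -> Prop) : Prop := {
  uf_full : U (fun _ => True);
  uf_nonempty : ~ U (fun _ => False);
  uf_mono : forall S T : I -> Prop, U S -> (forall i, S i -> T i) -> U T;
  uf_inter : forall S T : I -> Prop, U S -> U T -> U (fun i => S i /\ T i);
  uf_ultra : forall S : I -> Prop, U S \/ U (fun i => ~ S i)
}.

(* "Sufficient saturation": the ultrapower is an enlargement w.r.t. subsets
   of T: every family of subsets of T with the finite intersection property
   has a common point in the nonstandard extensions of its members. *)
Definition fip {T : Type} (F : (T -> Prop) -> Prop) : Prop :=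
  forall l : list (T -> Prop), Forall F l -> exists t, Forall (fun S => S t) l.

Definition enlargement (I T : Type) (U : (I -> Prop) -> Prop) : Prop :=
  forall F : (T -> Prop) -> Prop, fip F ->
    exists f : I -> T, forall S, F S -> U (fun i => S (f i)).

Definition star {I X : Type} (U : (I -> Prop) -> Prop) (A : X -> Prop)
  (x : I -> X) : Prop := U (fun i => A (x i)).

Definition nseq {I X : Type} (U : (I -> Prop) -> Prop) (x y : I -> X) : Prop :=
  U (fun i => x i = y i).

Definition rel_comp {X : Type} (E F : X -> X -> Prop) : X -> X -> Prop :=
  fun x z => exists y, E x y /\ F y z.

Record coarse_structure {X : Type} (C : (X -> X -> Prop) -> Prop) : Prop := {
  cs_diag : C (fun x y => x = y);
  cs_sub : forall E F : X -> X -> Prop, C E -> (forall x y, F x y -> E x y) -> C F;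
  cs_union : forall E F, C E -> C F -> C (fun x y => E x y \/ F x y);
  cs_inv : forall E, C E -> C (fun x y => E y x);
  cs_comp : forall E F, C E -> C F -> C (rel_comp E F)
}.

Definition connected {X : Type} (C : (X -> X -> Prop) -> Prop) : Prop :=
  forall a b : X, C (fun x y => x = a /\ y = b).

Definition bounded {X : Type} (C : (X -> X -> Prop) -> Prop) (B : X -> Prop) : Prop :=
  C (fun x y => B x /\ B y).

Definition INF {I X : Type} (U : (I -> Prop) -> Prop) (C : (X -> X -> Prop) -> Prop)
  (x : I -> X) : Prop :=
  forall B, bounded C B -> ~ star U B x.

Definition csim {I X : Type} (U : (I -> Prop) -> Prop) (C : (X -> X -> Prop) -> Prop)
  (x y : I -> X) : Prop :=
  exists E, C E /\ U (fun i => E (x i) (y i)).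

Definition galaxy {I X : Type} (U : (I -> Prop) -> Prop) (C : (X -> X -> Prop) -> Prop)
  (x : I -> X) : (I -> X) -> Prop := fun y => csim U C x y.

Definition thin {X : Type} (C : (X -> X -> Prop) -> Prop) (A : X -> Prop) : Prop :=
  forall E, C E -> exists B, bounded C B /\
    forall x y, A x -> ~ B x -> A y -> ~ B y -> x <> y ->
      ~ (exists z, E x z /\ E y z).

(* If A is thin, two infinite points of *A at finite distance would, by transfer of the
   thinness condition for the controlled set E ∪ Δ, have to coincide.  Conversely, if A
   is not thin for some controlled E, then for every bounded B there are distinct points
   of A outside B whose E-balls meet; these conditions have the finite intersection
   property (bounded sets are closed under finite unions), so saturation yields a pair
   of distinct infinite points of *A joined by E∘E⁻¹.  Finally two points lie in a common
   galaxy exactly when they are at finite distance. *)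

From Stdlib Require Import List Classical.

Section CoarseStructure.

Context {X : Type} {C : (X -> X -> Prop) -> Prop}.
Hypothesis HC : coarse_structure C.

Lemma bounded_empty : bounded C (fun _ => False).
Proof.
  apply (cs_sub _ HC _ _ (cs_diag _ HC)); intros x y [[] _].
Qed.

Lemma controlled_comp_transpose {E F : X -> X -> Prop} :
  C E -> C F -> C (rel_comp E (fun x y => F y x)).
Proof.
  intros HE HF; apply (cs_comp _ HC); [exact HE | exact (cs_inv _ HC _ HF)].
Qed.

(* Connectedness is needed to join two nonempty bounded sets by a controlled set. *)
Lemma bounded_union {B1 B2 : X -> Prop} : connected C ->
  bounded C B1 -> bounded C B2 -> bounded C (fun x => B1 x \/ B2 x).
Proof.
  unfold bounded; intros Hconn HB1 HB2.
  destruct (classic (exists a, B1 a)) as [[a1 Ha1]|N1].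
  2:{ apply (cs_sub _ HC _ _ HB2); intros x y [[h|h] [h'|h']]; auto;
      exfalso; apply N1; eauto. }
  destruct (classic (exists a, B2 a)) as [[a2 Ha2]|N2].
  2:{ apply (cs_sub _ HC _ _ HB1); intros x y [[h|h] [h'|h']]; auto;
      exfalso; apply N2; eauto. }
  set (M := rel_comp (rel_comp (fun x y => B1 x /\ B1 y) (fun x y => x = a1 /\ y = a2))
                     (fun x y => B2 x /\ B2 y)).
  assert (HM : C M) by (apply (cs_comp _ HC); [apply (cs_comp _ HC)|]; auto).
  assert (HMi := cs_inv _ HC _ HM).
  apply (cs_sub _ HC _ _ (cs_union _ HC _ _ (cs_union _ HC _ _ HB1 HB2)
                                           (cs_union _ HC _ _ HM HMi))).
  intros x y [[h|h] [h'|h']].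
  - left; left; auto.
  - right; left; exists a2; split; [exists a1|]; auto.
  - right; right; exists a2; split; [exists a1|]; auto.
  - left; right; auto.
Qed.

End CoarseStructure.

Section Ultrapower.

Context {I X : Type} {U : (I -> Prop) -> Prop} {C : (X -> X -> Prop) -> Prop}.
Hypothesis HU : ultrafilter U.
Hypothesis HC : coarse_structure C.

Lemma INF_iff (x : I -> X) :
  INF U C x <-> forall B, bounded C B -> U (fun i => ~ B (x i)).
Proof.
  split.
  - intros Hx B HB; destruct (uf_ultra _ HU (fun i => B (x i))) as [h|h]; auto.
    exfalso; exact (Hx B HB h).
  - intros Hx B HB Hs; apply (uf_nonempty _ HU).
    apply (uf_mono _ HU _ _ (uf_inter _ HU _ _ Hs (Hx B HB))); tauto.
Qed.

Lemma galaxy_refl (x : I -> X) : galaxy U C x x.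
Proof.
  exists (fun a b => a = b); split; [exact (cs_diag _ HC)|].
  apply (uf_mono _ HU _ _ (uf_full _ HU)); auto.
Qed.

Lemma csim_of_galaxy {x y z : I -> X} :
  galaxy U C x z -> galaxy U C y z -> csim U C x y.
Proof.
  intros [E [HE Hxz]] [F [HF Hyz]].
  exists (rel_comp E (fun a b => F b a)); split.
  - exact (controlled_comp_transpose HC HE HF).
  - apply (uf_mono _ HU _ _ (uf_inter _ HU _ _ Hxz Hyz)); intros i [h h'].
    exists (z i); auto.
Qed.

(* A family of subsets of T indexed antitonically by the bounded sets has the finite
   intersection property, so an enlargement meets all of its members at once. *)
Lemma enlargement_bounded_family {T : Type} {S : (X -> Prop) -> T -> Prop} :
  connected C -> enlargement I T U ->
  (forall B B' t, (forall a, B a -> B' a) -> S B' t -> S B t) ->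
  (forall B, bounded C B -> exists t, S B t) ->
  exists f : I -> T, forall B, bounded C B -> U (fun i => S B (f i)).
Proof.
  intros Hconn Hsat S_anti S_ne.
  set (F := fun P : T -> Prop => exists B, bounded C B /\ P = S B).
  assert (Hfip : fip F).
  { intros l Hl.
    assert (HB0 : exists B0, bounded C B0 /\ Forall (fun P => forall t, S B0 t -> P t) l).
    { induction Hl as [|P l [B [HB ->]] _ [B0 [HB0 Hsub]]].
      - exists (fun _ => False); split; [exact (bounded_empty HC) | constructor].
      - exists (fun a => B a \/ B0 a); split; [exact (bounded_union HC Hconn HB HB0)|].
        constructor.
        + intros t; apply S_anti; intros a h; left; exact h.
        + eapply Forall_impl; [|exact Hsub]; intros P' HP' t Ht.
          apply HP', (S_anti _ _ _ (fun a h => or_intror h) Ht). }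
    destruct HB0 as [B0 [HB0 Hsub]]; destruct (S_ne B0 HB0) as [t Ht].
    exists t; eapply Forall_impl; [|exact Hsub]; auto. }
  destruct (Hsat F Hfip) as [f Hf].
  exists f; intros B HB; apply Hf; exists B; auto.
Qed.

Variable A : X -> Prop.

Lemma nseq_of_thin_csim (x y : I -> X) : thin C A ->
  star U A x -> INF U C x -> star U A y -> INF U C y -> csim U C x y -> nseq U x y.
Proof.
  intros Hth Ax Ix Ay Iy [E [HE Hxy]].
  destruct (Hth _ (cs_union _ HC _ _ HE (cs_diag _ HC))) as [B [HB Hdisj]].
  pose proof (proj1 (INF_iff x) Ix B HB) as Ox; pose proof (proj1 (INF_iff y) Iy B HB) as Oy.
  unfold star in *.
  apply (uf_mono _ HU _ _ (uf_inter _ HU _ _ Ax (uf_inter _ HU _ _ Ay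
           (uf_inter _ HU _ _ Ox (uf_inter _ HU _ _ Oy Hxy))))).
  intros i (Ax' & Ay' & Bx & By & Exy); apply NNPP; intro Hne.
  apply (Hdisj _ _ Ax' Bx Ay' By Hne); exists (y i); auto.
Qed.

Definition bad_pair (E : X -> X -> Prop) (B : X -> Prop) (p : X * X) : Prop :=
  A (fst p) /\ A (snd p) /\ ~ B (fst p) /\ ~ B (snd p) /\ fst p <> snd p /\
  exists z, E (fst p) z /\ E (snd p) z.

Lemma bad_pair_antitone E B B' p :
  (forall a, B a -> B' a) -> bad_pair E B' p -> bad_pair E B p.
Proof. unfold bad_pair; intuition. Qed.

Lemma bad_pair_everywhere_of_not_thin :
  ~ thin C A -> exists E, C E /\ forall B, bounded C B -> exists p, bad_pair E B p.
Proof.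
  intros Hnot; apply NNPP; intros Hno; apply Hnot; intros E HE.
  apply NNPP; intros HnoB; apply Hno; exists E; split; [exact HE|].
  intros B HB; apply NNPP; intros Hnop; apply HnoB; exists B; split; [exact HB|].
  intros a b Aa Ba Ab Bb Hab Hz; apply Hnop; exists (a, b); red; simpl; tauto.
Qed.

Lemma thin_of_csim_nseq : connected C -> enlargement I (X * X) U ->
  (forall x y : I -> X, star U A x -> INF U C x -> star U A y -> INF U C y ->
     csim U C x y -> nseq U x y) ->
  thin C A.
Proof.
  intros Hconn Hsat Hsep; apply NNPP; intros Hnot.
  destruct (bad_pair_everywhere_of_not_thin Hnot) as [E [HE Hbad]].
  destruct (enlargement_bounded_family Hconn Hsat (bad_pair_antitone E) Hbad)
    as [f Hf].
  set (x := fun i => fst (f i)); set (y := fun i => snd (f i)).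
  assert (Hbad0 := Hf _ (bounded_empty HC)).
  assert (Hxy : nseq U x y).
  { apply Hsep.
    - apply (uf_mono _ HU _ _ Hbad0); intros i h; apply h.
    - apply INF_iff; intros B HB; apply (uf_mono _ HU _ _ (Hf B HB)); intros i h; apply h.
    - apply (uf_mono _ HU _ _ Hbad0); intros i h; apply h.
    - apply INF_iff; intros B HB; apply (uf_mono _ HU _ _ (Hf B HB)); intros i h; apply h.
    - exists (rel_comp E (fun a b => E b a)); split.
      + exact (controlled_comp_transpose HC HE HE).
      + apply (uf_mono _ HU _ _ Hbad0); intros i (_&_&_&_&_&z&h1&h2); exists z; auto. }
  apply (uf_nonempty _ HU), (uf_mono _ HU _ _ (uf_inter _ HU _ _ Hbad0 Hxy)).
  intros i [(_&_&_&_&Hne&_) Heq]; exact (Hne Heq).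
Qed.

End Ultrapower.

Theorem mainTheorem17 (I X : Type) (U : (I -> Prop) -> Prop)
  (C : (X -> X -> Prop) -> Prop) (A : X -> Prop)
  (HU : ultrafilter U) (Hsat : enlargement I (X * X) U)
  (HC : coarse_structure C) (Hconn : connected C) :
  let P1 := thin C A in
  let P2 := forall x y : I -> X,
      star U A x -> INF U C x -> star U A y -> INF U C y ->
      csim U C x y -> nseq U x y in
  let P3 := forall x y : I -> X,
      star U A x -> INF U C x -> star U A y -> INF U C y ->
      ~ nseq U x y ->
      forall z, ~ (galaxy U C x z /\ galaxy U C y z) in
  (P1 <-> P2) /\ (P2 <-> P3).
Proof.
  intros P1 P2 P3; split; split.
  - intros Hth x y; exact (nseq_of_thin_csim HU HC A x y Hth).
  - exact (thin_of_csim_nseq HU HC A Hconn Hsat).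
  - intros Hsep x y Ax Ix Ay Iy Nxy z [Hxz Hyz].
    exact (Nxy (Hsep x y Ax Ix Ay Iy (csim_of_galaxy HU HC Hxz Hyz))).
  - intros Hdisj x y Ax Ix Ay Iy Hxy; apply NNPP; intros Nxy.
    exact (Hdisj x y Ax Ix Ay Iy Nxy y (conj Hxy (galaxy_refl HU HC y))).
Qed.
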